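(* For every integer $k\ge 1$, the set $S_{\ge k}(h)$ has positive density in the set of all rays as $h\to\infty$: $\liminf_{h\to\infty}\frac{|S_{\ge k}(h)|}{N_h}>0$, where $N_h$ is the number of rays $\rho$ with $|\rho|\le h$.
   Context: A ray is a half-line $\rho=\mathbb{R}_{\ge 0}v\subset\mathbb{R}^2$ with $v\in\mathbb{Z}^2\setminus\{0\}$; $u_\rho$ is its primitive lattice generator. On $\mathbb{Z}^2$ use the norm $|(x,y)|=\max\{|x|,|y|\}$, and $|\rho|=|u_\rho|$. $\Sigma_h$ is the complete fan whose rays are all rays $\rho$ with $|\rho|\le h$ and whose $2$-dimensional cones are spanned by angularly consecutive such rays. For $\rho\in\Sigma_h(1)$ with neighbors $\tau,\omega$ in $\Sigma_h$ (adjacent rays in angular order), the singularity index produced by blowing down along $\rho$ is $|\det(u_\tau,u_\omega)|$, equivalently the unique integer $k$ with $u_\tau+u_\omega=k\,u_\rho$. $S_{\ge k}(h)$ is the set of rays $\rho\in\Sigma_h(1)$ for which this index is at least $k$. *)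

From HB Require Import structures.
From mathcomp Require Import all_boot all_order all_algebra.
Set Implicit Arguments. Unset Strict Implicit. Unset Printing Implicit Defensive.
Import Order.TTheory GRing.Theory Num.Theory.
Local Open Scope ring_scope.

Definition vec := (int * int)%type.

Definition det (u v : vec) : int := u.1 * v.2 - u.2 * v.1.

Definition irange (h : nat) : seq int :=
  [seq (i%:Z - h%:Z) | i <- iota 0 (h + h).+1].

(* all v in Z^2 with |v| = max(|v1|,|v2|) <= h *)
Definition box (h : nat) : seq vec :=
  [seq (x, y) | x <- irange h, y <- irange h].

Definition primitive (u : vec) : bool := gcdz u.1 u.2 == 1%N.

(* Rays of Sigma_h, identified with their primitive generators u_rho,
   |u_rho| <= h.  N_h = size (rays h). *)
Definition rays (h : nat) : seq vec := [seq u <- box h | primitive u].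

(* v is the ray immediately following u counterclockwise in Sigma_h:
   v lies counterclockwise of u at an angle < pi and no ray of Sigma_h
   lies strictly inside the open cone between u and v. *)
Definition ccw_next (h : nat) (u v : vec) : bool :=
  (0 < det u v) && all (fun w => ~~ ((0 < det u w) && (0 < det w v))) (rays h).

(* rho lies in S_{>=k}(h): with neighbours tau (counterclockwise) and
   omega (clockwise) of rho in Sigma_h, |det(u_tau, u_omega)| >= k. *)
Definition in_S_ge (h k : nat) (u : vec) : bool :=
  has (fun t => has (fun o =>
     [&& ccw_next h u t, ccw_next h o u & (k%:Z <= `|det t o|)]) (rays h)) (rays h).

Definition S_ge (h k : nat) : seq vec := [seq u <- rays h | in_S_ge h k u].

(* A primitive u = (x, y) with 1 <= x, y <= m and (k + 1) m <= h has a Bezout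
   partner t0 in [0, x] * [0, y] with det(u, t0) = 1.  The vectors k u + t0 and
   k u - t0 are then rays of Sigma_h on either side of u, so the neighbours tau
   and omega of u are at least that close to u, and the Plucker relation gives
   |det(u_tau, u_omega)| >= 2k.  At least a quarter of the pairs in [1, m]^2 are
   coprime (union bound over common divisors d >= 2, using
   sum_(d >= 2) 1/d^2 <= 3/4), while N_h <= (2h + 1)^2 <= 36 (k + 1)^2 m^2 for
   m = h %/ (k + 1); hence |S_{>=k}(h)| >= N_h / (144 (k + 1)^2). *)

From HB Require Import structures.
From mathcomp Require Import all_boot all_order all_algebra.
From mathcomp Require Import zify ring lra.
Set Implicit Arguments. Unset Strict Implicit. Unset Printing Implicit Defensive.
Import Order.TTheory GRing.Theory Num.Theory.
Local Open Scope ring_scope.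

Definition vlin (a : int) (u : vec) (b : int) (v : vec) : vec :=
  (a * u.1 + b * v.1, a * u.2 + b * v.2).

Lemma det_vlinl a u b v w : det (vlin a u b v) w = a * det u w + b * det v w.
Proof. rewrite /det /=; ring. Qed.

Lemma det_vlinr a u b v w : det w (vlin a u b v) = a * det w u + b * det w v.
Proof. rewrite /det /=; ring. Qed.

Lemma detC u v : det v u = - det u v.
Proof. rewrite /det; ring. Qed.

Lemma det_self u : det u u = 0.
Proof. by rewrite /det mulrC subrr. Qed.

Lemma det_oppl u v : det (- u.1, - u.2) v = det v u.
Proof. rewrite /det /=; ring. Qed.

Lemma det_plucker a b c d :
  det a b * det c d = det a c * det b d - det a d * det b c.
Proof. rewrite /det; ring. Qed.

Lemma det_gt0_trans u a b c : 0 < det u a -> 0 < det u b -> 0 < det u c ->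
  0 < det a b -> 0 < det b c -> 0 < det a c.
Proof.
move=> ua ub uc ab bc.
have E : det u b * det a c = det u a * det b c + det u c * det a b.
  by rewrite det_plucker [det b a]detC; ring.
have : 0 < det u b * det a c by rewrite E addr_gt0 ?mulr_gt0.
by rewrite pmulr_rgt0.
Qed.

Lemma mem_irange h z : (z \in irange h) = (`|z| <= h%:Z).
Proof.
apply/mapP/idP => [[i] | zh].
  by rewrite mem_iota => /andP[_ ih] ->; lia.
by exists (absz (z + h%:Z)); rewrite ?mem_iota; lia.
Qed.

Lemma mem_box h v : (v \in box h) = (`|v.1| <= h%:Z) && (`|v.2| <= h%:Z).
Proof.
case: v => x y; apply/allpairsP/andP => [[[a b] /= [ha hb [-> ->]]] | [hx hy]].
  by rewrite -!mem_irange.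
by exists (x, y); rewrite !mem_irange.
Qed.

Lemma primitive_of_det u w : `|det u w| = 1 -> primitive w.
Proof.
move=> d1; have : (gcdz w.1 w.2 %| det u w)%Z.
  by rewrite rpredB ?dvdz_mull ?dvdz_gcdl ?dvdz_gcdr.
rewrite dvdzE.
have -> : absz (det u w) = 1%N by apply/eqP; rewrite -eqz_nat abszE d1.
by rewrite dvdn1.
Qed.

Lemma exists_minimal (T : eqType) (r : rel T) (s : seq T) :
  s != [::] -> {in s & &, transitive r} -> {in s, irreflexive r} ->
  exists2 m, m \in s & {in s, forall w, ~~ r w m}.
Proof.
elim: s => [|a s IH] // _ r_trans r_irr.
have [-> | s_nil] := eqVneq s [::].
  by exists a => [|w]; rewrite ?mem_seq1 // => /eqP ->; rewrite r_irr ?mem_head.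
have [||m ms m_min] := IH s_nil.
- by move=> y x z ys xs zs; apply: r_trans; rewrite inE ?xs ?ys ?zs orbT.
- by move=> x xs; apply: r_irr; rewrite inE xs orbT.
have [am | nam] := boolP (r a m).
  exists a => [|w]; rewrite ?mem_head // inE => /predU1P[-> | ws].
    by rewrite r_irr ?mem_head.
  apply/negP => wa; have := m_min w ws.
  by rewrite (r_trans a) ?inE ?ws ?ms ?eqxx ?orbT.
by exists m => [|w]; rewrite ?inE ?ms ?orbT // => /predU1P[-> | /m_min].
Qed.

Lemma exists_ccw_next h u w : w \in rays h -> 0 < det u w ->
  exists2 t, t \in rays h & ccw_next h u t && (det w t <= 0).
Proof.
move=> wr uw; pose L := [seq v <- rays h | 0 < det u v].
have wL : w \in L by rewrite mem_filter uw wr.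
have [|||t tL t_min] := @exists_minimal _ (fun a b => 0 < det a b) L.
- by apply/negP => /eqP L0; rewrite L0 in wL.
- move=> b a c; rewrite !mem_filter => /andP[ub _] /andP[ua _] /andP[uc _].
  exact: det_gt0_trans ua ub uc.
- by move=> a _; rewrite det_self ltxx.
move: tL; rewrite mem_filter => /andP[ut tr]; exists t => //.
rewrite leNgt t_min // andbT /ccw_next ut /=; apply/allP => v vr.
apply/negP => /andP[uv vt]; have := t_min v.
by rewrite mem_filter uv vr vt => /(_ isT).
Qed.

Lemma exists_cw_next h u w : w \in rays h -> 0 < det w u ->
  exists2 o, o \in rays h & ccw_next h o u && (det o w <= 0).
Proof.
move=> wr wu; pose L := [seq v <- rays h | 0 < det v u].
have wL : w \in L by rewrite mem_filter wu wr.
have [|||o oL o_min] := @exists_minimal _ (fun a b => 0 < det b a) L.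
- by apply/negP => /eqP L0; rewrite L0 in wL.
- move=> b a c; rewrite !mem_filter => /andP[bu _] /andP[au _] /andP[cu _] ba cb.
  by apply: (@det_gt0_trans (- u.1, - u.2) c b a); rewrite ?det_oppl.
- by move=> a _; rewrite det_self ltxx.
move: oL; rewrite mem_filter => /andP[ou or]; exists o => //.
rewrite leNgt o_min // andbT /ccw_next ou /=; apply/allP => v vr.
apply/negP => /andP[ov vu]; have := o_min v.
by rewrite mem_filter vu vr ov => /(_ isT).
Qed.

(* By Plucker, -det t o = det u t * det o t0 + det t t0 * det o u, and the last
   two hypotheses say that det o t0 >= k det o u and det t t0 >= k det u t. *)
Lemma neighbours_det_le (k : int) u t0 t o : 0 <= k -> det u t0 = 1 ->
  0 < det u t -> 0 < det o u ->
  det (vlin k u 1 t0) t <= 0 -> det o (vlin k u (-1) t0) <= 0 ->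
  2 * k <= - det t o.
Proof.
move=> k0 ut0 ut ou; rewrite det_vlinl det_vlinr !mul1r !mulN1r [det t0 t]detC.
have := det_plucker t o u t0; rewrite ut0 mulr1 [det t u]detC => ->.
move: (det u t) (det o u) (det t t0) (det o t0) ut ou => a b x y a0 b0 hx hy.
nia.
Qed.

Lemma in_S_ge_of_det1 h k u t0 : det u t0 = 1 ->
  vlin k%:Z u 1 t0 \in box h -> vlin k%:Z u (-1) t0 \in box h -> in_S_ge h k u.
Proof.
set tp := vlin _ _ 1 _; set tm := vlin _ _ (-1) _ => ut0 tp_box tm_box.
have u_tp : det u tp = 1 by rewrite det_vlinr det_self ut0; ring.
have tm_u : det tm u = 1 by rewrite det_vlinl det_self detC ut0; ring.
have tp_rays : tp \in rays h.
  by rewrite mem_filter tp_box (@primitive_of_det u) ?u_tp.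
have tm_rays : tm \in rays h.
  by rewrite mem_filter tm_box (@primitive_of_det u) // detC tm_u normrN.
have := @exists_ccw_next h u tp tp_rays; rewrite u_tp.
case=> // t tr /andP[ut_next tp_t].
have := @exists_cw_next h u tm tm_rays; rewrite tm_u.
case=> // o or /andP[ou_next o_tm].
apply/hasP; exists t => //; apply/hasP; exists o => //; rewrite ut_next ou_next /=.
move: ut_next ou_next => /andP[ut _] /andP[ou _].
have := neighbours_det_le (le0z_nat k) ut0 ut ou tp_t o_tm.
by rewrite -normrN; lia.
Qed.

Lemma quadrant_in_S_ge h k m x y : (k.+1 * m <= h)%N ->
  (0 < x <= m)%N -> (0 < y <= m)%N -> coprime x y -> (x%:Z, y%:Z) \in S_ge h k.
Proof.
move=> hm /andP[x0 xm] /andP[y0 ym] xy.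
case: (egcdnP y x0); rewrite (eqP xy) => q p qx px.
have qy : (q <= y)%N by rewrite -(leq_pmul2r x0) qx; nia.
rewrite mem_filter (@in_S_ge_of_det1 _ _ _ (p%:Z, q%:Z)) /=.
- by rewrite mem_filter mem_box [primitive _]xy /=; apply/andP; split; lia.
- by rewrite /det /=; lia.
- by rewrite mem_box /=; apply/andP; split; nia.
- by rewrite mem_box /=; apply/andP; split; nia.
Qed.

Definition coprime_pairs (m : nat) : seq (nat * nat) :=
  [seq xy <- [seq (x, y) | x <- iota 1 m, y <- iota 1 m] | coprime xy.1 xy.2].

Lemma size_coprime_pairs m :
  size (coprime_pairs m) = (\sum_(1 <= x < m.+1) \sum_(1 <= y < m.+1) coprime x y)%N.
Proof.
by rewrite size_filter -sum1_count big_mkcond big_allpairs /index_iota subn1.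
Qed.

Lemma sum_dvdn m d : (0 < d)%N -> (\sum_(1 <= x < m.+1) (d %| x))%N = (m %/ d)%N.
Proof.
move=> d0; elim: m => [|m IH]; first by rewrite big_geq ?div0n.
by rewrite big_nat_recr //= IH divnS // addnC.
Qed.

Lemma coprime_or_common_divisor n x y : (0 < x < n)%N ->
  (0 < coprime x y + \sum_(2 <= d < n) (d %| x) * (d %| y))%N.
Proof.
move=> /andP[x0 xn]; case: (boolP (coprime x y)) => // ncop.
have g_range : (2 <= gcdn x y < n)%N.
  have := dvdn_leq x0 (dvdn_gcdl x y); move: ncop; rewrite /coprime.
  have := gcdn_gt0 x y; rewrite x0 /=; lia.
rewrite (bigD1_seq (gcdn x y)) ?mem_index_iota ?iota_uniq //=.
by rewrite dvdn_gcdl dvdn_gcdr.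
Qed.

Lemma sqr_le_coprime_count_add m n : (m < n)%N ->
  (m ^ 2 <= \sum_(1 <= x < m.+1) \sum_(1 <= y < m.+1) coprime x y
           + \sum_(2 <= d < n) (m %/ d) ^ 2)%N.
Proof.
move=> mn; have -> : (m ^ 2 = \sum_(1 <= x < m.+1) \sum_(1 <= y < m.+1) 1)%N.
  by rewrite !sum_nat_const_nat subn1 muln1.
apply: (@leq_trans (\sum_(1 <= x < m.+1) \sum_(1 <= y < m.+1)
   (coprime x y + \sum_(2 <= d < n) (d %| x) * (d %| y)))%N).
  rewrite big_nat_cond [X in (_ <= X)%N]big_nat_cond.
  apply: leq_sum => x /andP[/andP[x1 xm] _]; apply: leq_sum => y _.
  by apply: coprime_or_common_divisor; rewrite x1 (leq_trans xm).
under eq_bigr do rewrite big_split /=.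
rewrite big_split leq_add2l /=; under eq_bigr do rewrite exchange_big /=.
rewrite exchange_big /=; apply: eq_leq; apply: eq_big_nat => d /andP[d2 _].
under eq_bigr do rewrite -big_distrr /=.
by rewrite -big_distrl /= sum_dvdn 1?(leq_trans _ d2).
Qed.

Lemma sqr_divn_le_telescope m d : (0 < d)%N ->
  ((m %/ d.+1) ^ 2)%:R <= (m ^ 2)%:R / d%:R - (m ^ 2)%:R / d.+1%:R :> rat.
Proof.
move=> d0; have -> : (m ^ 2)%:R / d%:R - (m ^ 2)%:R / d.+1%:R =
                     (m ^ 2)%:R / (d * d.+1)%:R :> rat.
  by rewrite natrM -natr1; field; rewrite natr1 !pnatr_eq0 /= -lt0n d0.
rewrite ler_pdivlMr ?ltr0n ?muln_gt0 ?d0 // -natrM ler_nat.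
apply: (@leq_trans ((m %/ d.+1 * d.+1) ^ 2)); first nia.
by rewrite leq_exp2r // leq_divM.
Qed.

Lemma sum_sqr_divn_le m n : (2 < n)%N ->
  (4 * \sum_(2 <= d < n) (m %/ d) ^ 2 <= 3 * m ^ 2)%N.
Proof.
move=> n2; rewrite big_ltn //.
have head : (4 * (m %/ 2) ^ 2 <= m ^ 2)%N.
  by have := leq_divM m 2; rewrite -(leq_exp2r _ _ (isT : 0 < 2)%N); nia.
suff tail : (2 * \sum_(3 <= d < n) (m %/ d) ^ 2 <= m ^ 2)%N by lia.
pose f d : rat := - ((m ^ 2)%:R / d.-1%:R).
rewrite -(ler_nat rat) natrM natr_sum.
apply: (@le_trans _ _ (2 * \sum_(3 <= d < n) (f d.+1 - f d))).
  rewrite ler_wpM2l // ; apply: ler_sum_nat => -[|d] /andP[d3 _] //.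
  by rewrite /f /= opprK addrC sqr_divn_le_telescope //; lia.
rewrite telescope_sumr // /f /=.
have : 0 <= (m ^ 2)%:R / n.-1%:R :> rat by rewrite divr_ge0.
lra.
Qed.

Lemma coprime_pairs_lower m : (m ^ 2 <= 4 * size (coprime_pairs m))%N.
Proof.
rewrite size_coprime_pairs.
have := @sqr_le_coprime_count_add m m.+3 (leqW (leqW (leqnn _))).
have := @sum_sqr_divn_le m m.+3 isT.
lia.
Qed.

Lemma coprime_pairs_le_S_ge h k m : (k.+1 * m <= h)%N ->
  (size (coprime_pairs m) <= size (S_ge h k))%N.
Proof.
move=> hm; rewrite -(size_map (fun xy : nat * nat => (xy.1%:Z, xy.2%:Z))).
apply: uniq_leq_size.
  rewrite map_inj_uniq ?filter_uniq ?allpairs_uniq ?iota_uniq //.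
  - by move=> [x y] [x' y'] _ _ [-> ->].
  - by move=> [x y] [x' y'] [-> ->].
move=> _ /mapP[[x y] + ->]; rewrite mem_filter => /andP[/= + /allpairsP[[x' y'] /=]].
move=> xy [xm ym [ex ey]]; subst x y; rewrite !mem_iota add1n !ltnS in xm ym.
exact: quadrant_in_S_ge hm xm ym xy.
Qed.

Lemma size_rays_le h : (size (rays h) <= (h + h).+1 ^ 2)%N.
Proof.
rewrite size_filter (leq_trans (count_size _ _)) //.
by rewrite size_allpairs !size_map size_iota.
Qed.

Lemma size_rays_le_S_ge h k : (k < h)%N ->
  (size (rays h) <= 144 * k.+1 ^ 2 * size (S_ge h k))%N.
Proof.
move=> kh; set m := (h %/ k.+1)%N.
have hm : (k.+1 * m <= h)%N by rewrite mulnC leq_divM.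
have box_m : ((h + h).+1 <= 6 * (k.+1 * m))%N.
  have m0 : (0 < m)%N by rewrite divn_gt0.
  by have := divn_eq h k.+1; have := ltn_pmod h (ltn0Sn k); rewrite -/m; nia.
have sq : ((h + h).+1 ^ 2 <= 36 * k.+1 ^ 2 * m ^ 2)%N.
  by rewrite -mulnA -expnMn -[36%N]/(6 ^ 2)%N -expnMn leq_exp2r.
apply: (leq_trans (size_rays_le h)); apply: (leq_trans sq).
have -> : (144 * k.+1 ^ 2 * size (S_ge h k) =
           36 * k.+1 ^ 2 * (4 * size (S_ge h k)))%N by ring.
apply: leq_mul => //; apply: (leq_trans (coprime_pairs_lower m)).
by rewrite leq_mul2l coprime_pairs_le_S_ge ?orbT.
Qed.

Theorem corollary4p1 (k : nat) (hk : (1 <= k)%N) :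
  exists c : rat, 0 < c /\
    exists H : nat, forall h : nat, (H <= h)%N ->
      c * (size (rays h))%:R <= (size (S_ge h k))%:R.
Proof.
(* The bound holds for k = 0 as well. *)
exists (144 * k.+1 ^ 2)%:R^-1; split; first by rewrite invr_gt0 ltr0n.
exists k.+1 => h kh.
by rewrite ler_pdivrMl ?ltr0n // -natrM ler_nat size_rays_le_S_ge.
Qed.
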